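(* The set $\mathcal{D}=\{G\in\mathcal{T}: (\mathbb{N},G) \text{ is divisible}\}$ is a dense $G_\delta$ subset of $\mathcal{T}$.
   Context: Let $\mathbb{N}^{\mathbb{N}\times\mathbb{N}}$ be the space of functions $\mathbb{N}\times\mathbb{N}\to\mathbb{N}$ with the product of discrete topologies. Let $\mathcal{A}=\{G\in\mathbb{N}^{\mathbb{N}\times\mathbb{N}}: G \text{ is an abelian group operation on } \mathbb{N} \text{ with identity element } 0\}$ and $\mathcal{T}=\{G\in\mathcal{A}: (\mathbb{N},G)\text{ is torsion-free}\}$, with the subspace topology. *)

From HB Require Import structures.
From mathcomp Require Import all_boot all_order all_algebra.
From mathcomp Require Import all_classical all_reals topology function_spaces
  subtype_topology borel_hierarchy.
Set Implicit Arguments.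
Unset Strict Implicit.
Unset Printing Implicit Defensive.
Local Open Scope classical_set_scope.

(* The space N^(N x N) with the product of discrete topologies
   (nat carries the discrete topology in MathComp-Analysis). *)
Definition Space := {ptws (nat * nat)%type -> nat}.

Definition gmul (G : nat * nat -> nat) (n x : nat) : nat :=
  iter n (fun y => G (x, y)) 0%N.

Definition is_abgroup0 (G : nat * nat -> nat) : Prop :=
  [/\ (forall x y z, G (G (x, y), z) = G (x, G (y, z))),
      (forall x y, G (x, y) = G (y, x)),
      (forall x, G (0%N, x) = x) &
      (forall x, exists y, G (x, y) = 0%N)].

Definition torsion_free (G : nat * nat -> nat) : Prop :=
  forall (n x : nat), (0 < n)%N -> gmul G n x = 0%N -> x = 0%N.

Definition divisible (G : nat * nat -> nat) : Prop :=
  forall (n x : nat), (0 < n)%N -> exists y, gmul G n y = x.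

Definition Aset : set Space := [set G | is_abgroup0 G].
Definition Tset : set Space := [set G | is_abgroup0 G /\ torsion_free G].

(* D as a subset of the subspace T (subspace topology = initial topology of
   the inclusion, provided by subtype_topology on set_type). *)
Definition Dset : set (set_type Tset) :=
  [set G | divisible (set_val G)].

From mathcomp Require Import all_boot all_classical topology function_spaces
  subtype_topology borel_hierarchy.
From mathcomp Require Import zify.
Set Implicit Arguments.
Unset Strict Implicit.
Local Open Scope classical_set_scope.

(* G_delta: an operation G is divisible iff for all n and x the equation
   (n+1)*y = x has a solution; each such condition is witnessed by finitely
   many values of G, hence defines an open set, and there are countably many.

   Density: a basic neighbourhood of G in T fixes finitely many values
   G(a,b), all below some bound N.  We build a divisible torsion-free H with
   H(a,b) = G(a,b) whenever a, b, G(a,b) < N.  The divisible hull of G is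
   realised on canonical representatives of fractions g/d (pairs in nat*nat);
   it is a divisible torsion-free group containing G.  Relabelling the hull
   by nat so that the fractions k/1 with k < N keep the label k, and
   transporting its operation along this relabelling, yields H. *)

Section DivisibleHull.
Variable G : nat * nat -> nat.
Hypothesis HG : is_abgroup0 G.

Definition op a b := G (a, b).
Arguments op : simpl never.

Lemma opA a b c : op (op a b) c = op a (op b c).
Proof. by case: HG => h _ _ _; apply: h. Qed.
Lemma opC a b : op a b = op b a.
Proof. by case: HG => _ h _ _; apply: h. Qed.
Lemma op0 a : op 0 a = a.
Proof. by case: HG => _ _ h _; apply: h. Qed.
Lemma opx0 a : op a 0 = a.
Proof. by rewrite opC op0. Qed.

Definition neg a := xget 0%N [set y | op a y = 0%N].
Lemma opN a : op a (neg a) = 0%N.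
Proof.
case: HG => _ _ _ inv; have [y hy] := inv a.
exact: (xgetI 0%N (P := [set y | op a y = 0%N]) hy).
Qed.
Lemma op_cancel a b c : op a c = op b c -> a = b.
Proof. by move=> h; rewrite -(opx0 a) -(opx0 b) -(opN c) -!opA h. Qed.

Definition mul n x := gmul G n x.
Arguments mul : simpl never.

Lemma mul0 x : mul 0 x = 0%N. Proof. by []. Qed.
Lemma mulS n x : mul n.+1 x = op x (mul n x). Proof. by []. Qed.
Lemma mul1 x : mul 1 x = x. Proof. by rewrite mulS mul0 opx0. Qed.
Lemma mulx0 n : mul n 0 = 0%N.
Proof. by elim: n => // n IH; rewrite mulS IH op0. Qed.
Lemma mulD m n x : mul (m + n) x = op (mul m x) (mul n x).
Proof.
elim: m => [|m IH]; first by rewrite add0n mul0 op0.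
by rewrite addSn !mulS IH opA.
Qed.
Lemma mul_op n a b : mul n (op a b) = op (mul n a) (mul n b).
Proof.
elim: n => [|n IH]; first by rewrite !mul0 op0.
by rewrite !mulS IH !opA; congr op; rewrite -!opA; congr op; apply: opC.
Qed.
Lemma mulM m n x : mul (m * n) x = mul m (mul n x).
Proof.
elim: m => [|m IH]; first by rewrite mul0n !mul0.
by rewrite mulSn mulD IH mulS.
Qed.
Lemma mulC m n x : mul m (mul n x) = mul n (mul m x).
Proof. by rewrite -!mulM mulnC. Qed.

Hypothesis TF : torsion_free G.

Lemma mul_inj n a b : (0 < n)%N -> mul n a = mul n b -> a = b.
Proof.
move=> n0 h; apply: (@op_cancel _ _ (neg b)); rewrite opN.
by apply: (TF n0); rewrite -/(mul n _) mul_op h -mul_op opN mulx0.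
Qed.

(* The divisible hull: a pair p stands for the fraction p.1 / (p.2 + 1);
   frac_eq is equality of fractions, well behaved by torsion-freeness. *)
Definition den (p : nat * nat) := p.2.+1.
Arguments den : simpl never.
Definition frac_eq (p q : nat * nat) : Prop := mul (den q) p.1 = mul (den p) q.1.

Lemma frac_eq_refl p : frac_eq p p. Proof. by []. Qed.
Lemma frac_eq_sym p q : frac_eq p q -> frac_eq q p. Proof. by rewrite /frac_eq => ->. Qed.
Lemma frac_eq_trans p q r : frac_eq p q -> frac_eq q r -> frac_eq p r.
Proof.
rewrite /frac_eq => h1 h2; apply: (@mul_inj (den q)) => //.
by rewrite mulC h1 mulC h2 mulC.
Qed.

(* Addition of fractions: a/d + b/e = (e a + d b)/(d e). *)
Definition fadd (p q : nat * nat) : nat * nat :=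
  (op (mul (den q) p.1) (mul (den p) q.1), (den p * den q).-1).

Lemma den_fadd p q : den (fadd p q) = (den p * den q)%N.
Proof.
by change (den (fadd p q)) with (den p * den q).-1.+1; rewrite prednK // muln_gt0.
Qed.
Lemma pairE (a b : nat * nat) : a.1 = b.1 -> den a = den b -> a = b.
Proof. by case: a => a1 a2; case: b => b1 b2 /= -> [->]. Qed.
Lemma faddC p q : fadd p q = fadd q p.
Proof. by rewrite /fadd opC mulnC. Qed.
Lemma faddA p q r : fadd (fadd p q) r = fadd p (fadd q r).
Proof.
apply: pairE; last by rewrite !den_fadd mulnA.
rewrite /= !den_fadd (mul_op (den r)) (mul_op (den p)) -!mulM -[in RHS]opA.
by congr (op (op (mul _ _) (mul _ _)) (mul _ _)); lia.
Qed.
Lemma fadd_eql p p' q : frac_eq p p' -> frac_eq (fadd p q) (fadd p' q).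
Proof.
rewrite /frac_eq !den_fadd /= => h.
rewrite (mul_op (den p' * den q)) (mul_op (den p * den q)) -!mulM; congr op.
  rewrite (_ : (den p' * den q * den q = (den q * den q) * den p')%N); last lia.
  by rewrite mulM h -mulM; congr mul; lia.
by congr mul; lia.
Qed.

Lemma mul_frac_eq n p q : frac_eq p q -> frac_eq (mul n p.1, p.2) (mul n q.1, q.2).
Proof. by rewrite /frac_eq /= => h; rewrite mulC h mulC. Qed.

(* Canonical representatives of fractions; the hull is the set of them. *)
Definition can p := xget (0%N, 0%N) (frac_eq p).
Lemma canE p : frac_eq p (can p).
Proof. exact: (xgetI (0%N, 0%N) (frac_eq_refl p)). Qed.
Lemma can_eq p q : frac_eq p q -> can p = can q.
Proof.
move=> h; rewrite /can; congr xget; apply/funext => r; apply/propext.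
by split; [apply: frac_eq_trans (frac_eq_sym h) | apply: frac_eq_trans h].
Qed.
Lemma can_frac_eq p q : can p = can q -> frac_eq p q.
Proof.
by move=> h; apply: frac_eq_trans (canE p) _; rewrite h; apply/frac_eq_sym/canE.
Qed.

Definition hull : set (nat * nat) := [set p | can p = p].
Lemma hull_can p : hull (can p).
Proof. by apply/can_eq/frac_eq_sym/canE. Qed.

Definition hadd p q := can (fadd p q).
Definition hzero := can (0%N, 0%N).

Lemma hadd_canl p q : hadd (can p) q = hadd p q.
Proof. by apply/can_eq/fadd_eql/frac_eq_sym/canE. Qed.
Lemma hadd_canr p q : hadd p (can q) = hadd p q.
Proof. by rewrite /hadd faddC -/(hadd _ _) hadd_canl /hadd faddC. Qed.

Lemma hadd_hull p q : hull (hadd p q). Proof. exact: hull_can. Qed.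
Lemma haddA p q r : hadd (hadd p q) r = hadd p (hadd q r).
Proof. by rewrite hadd_canl hadd_canr /hadd faddA. Qed.
Lemma haddC p q : hadd p q = hadd q p.
Proof. by rewrite /hadd faddC. Qed.
Lemma hadd0 p : hull p -> hadd hzero p = p.
Proof.
move=> hp; rewrite hadd_canl -{2}hp; congr can.
apply: pairE; first by rewrite /fadd /= mulx0 op0 mul1.
by rewrite den_fadd [den (0%N, 0%N)]/den mul1n.
Qed.
Lemma haddN p : exists2 q, hull q & hadd p q = hzero.
Proof.
exists (can (neg p.1, p.2)); first exact: hull_can.
by rewrite hadd_canr; apply: can_eq; rewrite /frac_eq /= -mul_op opN !mulx0.
Qed.

Lemma hull_iter n p :
  iter n (hadd p) hzero = can (mul n p.1, p.2).
Proof.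
elim: n => [|n IH]; first by apply: can_eq; rewrite /frac_eq /= !mulx0.
rewrite iterS IH hadd_canr; apply: can_eq.
rewrite /frac_eq den_fadd /= -mul_op -mulS -mulM.
by congr mul; rewrite /den.
Qed.

(* The hull is torsion-free and divisible: (a/d)/n = a/(n d). *)
Lemma hull_torsion_free n p : (0 < n)%N -> hull p ->
  iter n (hadd p) hzero = hzero -> p = hzero.
Proof.
move=> n0 hp; rewrite hull_iter => /can_frac_eq.
rewrite /frac_eq mulx0 mul1 => /(TF n0) p0.
by rewrite -hp; apply: can_eq; rewrite /frac_eq /= p0 !mulx0.
Qed.

Lemma hull_divisible n p : (0 < n)%N -> hull p ->
  exists2 q, hull q & iter n (hadd q) hzero = p.
Proof.
move=> n0 hp; pose q := (p.1, (n * den p).-1).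
exists (can q); first exact: hull_can.
rewrite hull_iter -[RHS]hp; apply: can_eq.
apply: frac_eq_trans (mul_frac_eq n (frac_eq_sym (canE q))) _.
by rewrite /frac_eq /= -mulM /den /= prednK ?muln_gt0 ?n0 // mulnC.
Qed.

Definition embed g := can (g, 0%N).
Lemma embed_inj : injective embed.
Proof. by move=> a b /can_frac_eq; rewrite /frac_eq !mul1. Qed.
Lemma embed_hull g : hull (embed g). Proof. exact: hull_can. Qed.
Lemma embed_op a b : hadd (embed a) (embed b) = embed (G (a, b)).
Proof.
rewrite hadd_canl hadd_canr; apply: can_eq.
by rewrite /frac_eq /= !mul1.
Qed.

End DivisibleHull.

Section Relabel.
Variables (T : pointedType) (S : set T) (e : nat -> T) (N : nat).
Hypotheses (S_count : countable S) (e_inj : injective e)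
  (e_S : forall k, S (e k)).

Lemma relabel : exists phi : nat -> T,
  [/\ injective phi, forall k, S (phi k), forall p, S p -> exists k, phi k = p
    & forall k, (k < N)%N -> phi k = e k].
Proof.
pose E := e @` [set k | (k < N)%N].
have S_inf : infinite_set S.
  apply/infiniteP; apply: (@card_le_trans _ _ _ (e @` setT)).
    have : (e @` setT #= @setT nat)%card.
      by apply: inj_card_eq => x y _ _; apply: e_inj.
    by rewrite card_eq_le => /andP[].
  by apply: subset_card_le => _ [x _ <-].
have [f [f_in f_inj f_onto]] : exists f : nat -> T, set_bij setT (S `\` E) f.
  apply/card_set_bijP; rewrite card_eq_sym; apply: eq_card_nat.
    by apply: sub_countable S_count; apply: subset_card_le; apply: subDsetl.
  by apply: infinite_setD => //; apply/finite_image/finite_II.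
have f_notE k l : (l < N)%N -> f k <> e l.
  by move=> lN fe; have [_] := f_in k I; apply; exists l.
exists (fun k => if (k < N)%N then e k else f (k - N)%N); split.
- move=> a b; case: ifPn => aN; case: ifPn => bN.
  + exact: e_inj.
  + by move=> ef; case: (f_notE (b - N)%N a aN).
  + by move=> fe; case: (f_notE (a - N)%N b bN).
  + move/f_inj; rewrite !inE => /(_ I I); move: aN bN; rewrite -!leqNgt; lia.
- by move=> k; case: ifP => // _; have [] := f_in (k - N)%N I.
- move=> p Sp; have [[l lN <-]|notE] := pselect (E p).
    by exists l; rewrite lN.
  have [k _ <-] := f_onto p (conj Sp notE).
  by exists (k + N)%N; rewrite ltnNge leq_addl /= addnK.
- by move=> k ->.
Qed.

End Relabel.

Section Transport.
Variables (T : Type) (S : set T) (o : T -> T -> T) (e0 : T).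
Hypotheses (o_S : forall x y, S (o x y))
  (oA : forall x y z, o (o x y) z = o x (o y z))
  (oC : forall x y, o x y = o y x)
  (o0 : forall x, S x -> o e0 x = x)
  (oN : forall x, exists2 y, S y & o x y = e0).
Variable phi : nat -> T.
Hypotheses (phi_inj : injective phi) (phi_S : forall k, S (phi k))
  (phi_onto : forall p, S p -> exists k, phi k = p) (phi0 : phi 0 = e0).

Definition unphi p := xget 0%N [set k | phi k = p].
Lemma unphiK p : S p -> phi (unphi p) = p.
Proof. by move=> /phi_onto[k hk]; apply: (xgetI 0%N (P := [set l | phi l = p]) hk). Qed.

Definition transport (ab : nat * nat) := unphi (o (phi ab.1) (phi ab.2)).

Lemma transportE a b : phi (transport (a, b)) = o (phi a) (phi b).
Proof. exact: unphiK. Qed.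

Lemma transport_gmul n x : phi (gmul transport n x) = iter n (o (phi x)) e0.
Proof. by elim: n => //= n <-; rewrite -transportE. Qed.

Lemma transport_abgroup : is_abgroup0 transport.
Proof.
split.
- by move=> a b c; apply: phi_inj; rewrite !transportE oA.
- by move=> a b; apply: phi_inj; rewrite !transportE oC.
- by move=> a; apply: phi_inj; rewrite transportE phi0 o0.
- move=> a; have [y Sy ay] := oN (phi a).
  by exists (unphi y); apply: phi_inj; rewrite transportE unphiK ?phi0.
Qed.

Lemma transport_torsion_free :
  (forall n x, (0 < n)%N -> S x -> iter n (o x) e0 = e0 -> x = e0) ->
  torsion_free transport.
Proof.
move=> tf n x n0 h; apply: phi_inj; rewrite phi0; apply: tf n0 (phi_S x) _.
by rewrite -transport_gmul h phi0.
Qed.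

Lemma transport_divisible :
  (forall n x, (0 < n)%N -> S x -> exists2 y, S y & iter n (o y) e0 = x) ->
  divisible transport.
Proof.
move=> dv n x n0; have [y Sy yx] := dv n (phi x) n0 (phi_S x).
by exists (unphi y); apply: phi_inj; rewrite transport_gmul unphiK.
Qed.

End Transport.

Lemma divisible_extension (G : nat * nat -> nat) (N : nat) :
  is_abgroup0 G -> torsion_free G -> (0 < N)%N ->
  exists2 H, is_abgroup0 H /\ torsion_free H /\ divisible H &
    forall a b, (a < N)%N -> (b < N)%N -> (G (a, b) < N)%N -> H (a, b) = G (a, b).
Proof.
move=> HG TF N0.
have hull_count : countable (hull G) by apply: countableP.
have [phi [phi_inj phi_S phi_onto phi_e]] :=
  relabel N hull_count (embed_inj HG TF) (embed_hull HG TF).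
have phi0 : phi 0 = hzero G by rewrite phi_e.
pose H := transport (hadd G) phi.
have o_S := @hadd_hull G HG TF; have oA := haddA HG TF; have oC := haddC HG.
have o0 := hadd0 HG TF; have oN := haddN HG TF.
exists H; first split; [|split|].
- exact: (@transport_abgroup _ (hull G) _ (hzero G)).
- apply: (@transport_torsion_free _ (hull G) _ (hzero G)) => // n x.
  exact: hull_torsion_free.
- apply: (@transport_divisible _ (hull G) _ (hzero G)) => // n x.
  exact: hull_divisible.
move=> a b aN bN cN; apply: phi_inj.
by rewrite (transportE (S := hull G)) // !phi_e // embed_op.
Qed.

(* Basic neighbourhoods in the pointwise topology: the operations agreeing
   with G on a finite list of arguments. *)
Definition agrees_on (G : Space) (L : seq (nat * nat)) : set Space :=
  [set H | forall p, p \in L -> H p = G p].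

Lemma nbhs_agrees_on (G : Space) L : nbhs G (agrees_on G L).
Proof.
have nbhs_at p : nbhs G [set H : Space | H p = G p].
  apply: (@proj_continuous _ (fun _ : nat * nat => nat) p G [set G p]).
  by rewrite nbhs_principalE; apply/principal_filterP.
elim: L => [|p L IH]; first by apply: filterS filterT => H _ p.
apply: filterS (filterI (nbhs_at p) IH) => H [Hp HL] q.
by rewrite in_cons => /orP[/eqP->//|/HL].
Qed.

Lemma agrees_on_nbhs (G : Space) (A : set Space) :
  nbhs G A -> exists L, agrees_on G L `<=` A.
Proof.
pose F := filter_from setT (agrees_on G).
have F_filter : Filter F.
  apply: filter_from_filter; first by exists [::].
  move=> L L' _ _; exists (L ++ L') => // H HLL'.
  by split=> p pL; apply: HLL'; rewrite mem_cat pL ?orbT.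
suff : F --> G by move=> /(_ A) FA /FA [L _ LA]; exists L.
apply/(@cvg_sup _ _ (fun i => Topological.class
  (initial_topology (fun f : Space => f i)))) => i B.
rewrite nbhsE => -[C [[D _ <-] DG] CB].
by exists [:: i] => // H HG; apply: CB; rewrite /= (HG i) ?mem_head.
Qed.

Definition multiples_args (G : Space) n y : seq (nat * nat) :=
  [seq (y, gmul G k y) | k <- iota 0 n].

Lemma gmul_agrees_on (G H : Space) n y : agrees_on G (multiples_args G n y) H ->
  forall k, (k <= n)%N -> gmul H k y = gmul G k y.
Proof.
move=> HG; elim=> [//|k IH] kn; rewrite /= IH ?(ltnW kn) //.
by apply: HG; apply/mapP; exists k; rewrite // mem_iota add0n kn.
Qed.

Definition solvable (n x : nat) : set Space := [set G | exists y, gmul G n.+1 y = x].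

Lemma solvable_open n x : open (solvable n x).
Proof.
rewrite openE => G [y Gy]; apply: filterS (nbhs_agrees_on G (multiples_args G n.+1 y)).
by move=> H HG; exists y; rewrite (gmul_agrees_on HG (leqnn _)).
Qed.

Lemma Dset_Gdelta : Gdelta Dset.
Proof.
pose F i : set (set_type Tset) := if @unpickle (nat * nat)%type i is Some (n, x)
  then set_val @^-1` solvable n x else setT.
exists F.
  move=> i; rewrite /F; case: (unpickle i) => [[n x]|]; last exact: openT.
  by exists (solvable n x) => //; apply: solvable_open.
apply/seteqP; split => G DG.
  by move=> i _; rewrite /F; case: (unpickle i) => [[n x]|] //; apply: DG.
move=> n x n0; have := DG (pickle (n.-1, x)) I.
by rewrite /F pickleK /= /solvable prednK.
Qed.

Lemma sumn_map_ge (f : nat * nat -> nat) (L : seq (nat * nat)) p :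
  p \in L -> (f p <= sumn [seq f q | q <- L])%N.
Proof.
elim: L => //= q L IH; rewrite in_cons => /orP[/eqP->|/IH]; first exact: leq_addr.
by move/leq_trans; apply; apply: leq_addl.
Qed.

(* Density: every nonempty open set of T, which contains some
   agrees_on G L, meets D by divisible_extension. *)
Lemma Dset_dense : dense Dset.
Proof.
move=> O [G OG] [C oC CO]; rewrite -CO in OG.
have [L LC] := agrees_on_nbhs (open_nbhs_nbhs (conj oC OG)).
have [Gab Gtf] : Tset (set_val G) by apply: set_valP.
pose N := (sumn [seq (q.1 + q.2 + set_val G q)%N | q <- L]).+1.
have [H [Hab [Htf Hdiv]] HG] := divisible_extension (N := N) Gab Gtf (ltn0Sn _).
have HT : H \in Tset by apply: mem_set.
exists (exist (fun f => f \in Tset) H HT); split => //.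
rewrite -CO; apply: LC => -[a b] abL.
have := sumn_map_ge (fun q => (q.1 + q.2 + set_val G q)%N) abL => /= bound.
apply: HG; rewrite ltnS; apply: leq_trans bound.
- by rewrite -addnA leq_addr.
- by rewrite addnAC leq_addl.
- exact: leq_addl.
Qed.

Theorem lemma4p3 : dense Dset /\ Gdelta Dset.
Proof. exact: (conj Dset_dense Dset_Gdelta). Qed.
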